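(* Let $X$ and $Y$ be jointly spacelike slices (i.e. $X\cup Y$ is spacelike). Then the presheaf $(X\vee Y)(-):\mathsf{Slice}^{op}\to\mathsf{Set}$ is representable (namely by the slice $X\cup Y$).
   Context: Fix a connected, time-orientable Lorentzian manifold $\mathcal{M}$ with a fixed time-orientation (no further causality assumptions). A causal curve is an equivalence class, up to monotone reparametrisation, of smooth regular paths $\mu:\iota\to\mathcal{M}$ ($\iota\subseteq\mathbb{R}$ an interval) whose tangent is everywhere timelike or null; it is future-directed if the tangent is everywhere future-directed. Write $x\prec y$ if $x=y$ or there is a future-directed causal curve from $x$ to $y$. A region $A\subseteq\mathcal{M}$ is spacelike if no two distinct points $x,y\in A$ satisfy $x\prec y$. A slice is a closed spacelike subset of $\mathcal{M}$; slices $X,Y$ are jointly spacelike if $X\cup Y$ is spacelike. For regions $A,B$, $\mathcal{C}[A,B]$ is the set of future-directed causal curves passing through $A$ and then $B$: for a representative path $\mu:\iota\to\mathcal{M}$, there exists $q\in\iota$ with $\mu(q)\in B$, and for every such $q$ there exists $p\le q$ with $\mu(p)\in A$. The category $\mathsf{Slice}$ has slices as objects, $\mathsf{Slice}(X,Y)=\mathcal{P}(\mathcal{C}[X,Y])$ (the powerset), composition $T\circ S:=T\cap S$, identities $1_X=\mathcal{C}[X,X]$. For slices $X,Y$, $(X\vee Y)(-)$ is the presheaf with $(X\vee Y)(Z):=\mathcal{P}(\mathcal{C}[Z,X]\cup\mathcal{C}[Z,Y])$ and $(X\vee Y)(U:Z'\to Z):C\mapsto C\cap U$. *)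

From HB Require Import structures.
From mathcomp Require Import all_boot all_order all_algebra.
From mathcomp Require Import all_classical all_reals all_analysis.
Set Implicit Arguments. Unset Strict Implicit. Unset Printing Implicit Defensive.
Import Order.TTheory GRing.Theory Num.Theory.
Local Open Scope classical_set_scope.
Local Open Scope ring_scope.

(* A spacetime, seen through its causal paths.  [fd_path I mu] means:
   I is an interval of R and mu restricted to I is a smooth regular path
   whose tangent is everywhere future-directed timelike or null, for the
   fixed Lorentzian metric and time-orientation of the manifold.
   Differential geometry is not available in the libraries, so the
   smooth/Lorentzian structure is abstracted to this predicate together with
   the only structural facts about it that we record: paths live on
   intervals, and restricting to a non-empty subinterval keeps the path a
   future-directed causal path. *)
Record spacetime (R : realType) := Spacetime {
  st_pt :> topologicalType;
  st_connected : connected [set: st_pt];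
  fd_path : set R -> (R -> st_pt) -> Prop;
  fd_path_interval : forall I mu, fd_path I mu -> is_interval I;
  fd_path_restr : forall I J mu, fd_path I mu -> is_interval J ->
     J `<=` I -> J !=set0 -> fd_path J mu }.

Section Causal.
Variables (R : realType) (M : spacetime R).

Record curve := Curve {
  c_dom : set R;
  c_path : R -> M;
  c_fd : fd_path c_dom c_path }.

Definition prec (x y : M) : Prop :=
  x = y \/ exists c : curve, exists p q, c_dom c p /\ c_dom c q /\ p <= q /\
      c_path c p = x /\ c_path c q = y.

Definition spacelike (A : set M) : Prop :=
  forall x y, A x -> A y -> x <> y -> ~ prec x y.

Definition is_slice (A : set M) : Prop := closed A /\ spacelike A.

Record slice := Slice { sl_set :> set M; sl_ok : is_slice sl_set }.

Definition Ccurves (A B : set M) : set curve :=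
  [set c | (exists q, c_dom c q /\ B (c_path c q)) /\
           forall q, c_dom c q -> B (c_path c q) ->
             exists p, c_dom c p /\ p <= q /\ A (c_path c p)].

(* Slice(X,Y) = powerset of C[X,Y] *)
Definition hom (X Y : slice) := {S : set curve | S `<=` Ccurves X Y}.

Lemma Ccurves_trans (X Y Z : set M) :
  Ccurves Y Z `&` Ccurves X Y `<=` Ccurves X Z.
Proof.
move=> c [[hZ HZ] [_ HY]]; split => // q dq zq.
have [p [dp [pq yp]]] := HZ q dq zq.
have [r [dr [rp xr]]] := HY p dp yp.
by exists r; split => //; split => //; apply: le_trans rp pq.
Qed.

Definition comp (X Y Z : slice) (T : hom Y Z) (S : hom X Y) : hom X Z :=
  exist (fun S0 => S0 `<=` Ccurves X Z) (proj1_sig T `&` proj1_sig S)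
    (fun c '(conj tc sc) => Ccurves_trans (conj (proj2_sig T c tc) (proj2_sig S c sc))).

Definition veeP (X Y Z : slice) :=
  {C : set curve | C `<=` Ccurves Z X `|` Ccurves Z Y}.

Definition vee_map (X Y Z Z' : slice) (U : hom Z' Z) (C : veeP X Y Z) : veeP X Y Z' :=
  exist (fun C0 => C0 `<=` Ccurves Z' X `|` Ccurves Z' Y) (proj1_sig C `&` proj1_sig U)
    (fun c '(conj cc uc) =>
       match proj2_sig C c cc with
       | or_introl h => or_introl (Ccurves_trans (conj h (proj2_sig U c uc)))
       | or_intror h => or_intror (Ccurves_trans (conj h (proj2_sig U c uc)))
       end).

Definition represents (X Y W : slice) : Prop :=
  exists phi : forall Z : slice, hom Z W -> veeP X Y Z,
    (forall Z, bijective (phi Z)) /\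
    (forall (Z Z' : slice) (U : hom Z' Z) (S : hom Z W),
        phi Z' (comp S U) = vee_map U (phi Z S)).

End Causal.

From Pilot Require Import Defs.
From mathcomp Require Import all_boot all_order all_algebra.
From mathcomp Require Import all_classical all_reals all_analysis.
Import Order.TTheory.

Set Implicit Arguments.
Unset Strict Implicit.
Unset Printing Implicit Defensive.
Local Open Scope classical_set_scope.

(* A future-directed causal curve meets a spacelike set in at most one point.
   So when [X `|` Y] is spacelike, a curve through [Z] and then [X `|` Y] that
   meets [X] is a curve through [Z] and then [X] (likewise for [Y]), i.e.
   C[Z, X u Y] = C[Z, X] u C[Z, Y].  Hence Slice(Z, X u Y) and (X v Y)(Z) are
   the same powerset, and the identity is natural because composition and the
   presheaf action are both intersection. *)

Section CausalCurves.
Variables (R : realType) (M : spacetime R).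

Lemma spacelike_curve_eq (A : set M) (c : curve M) (p q : R) :
  spacelike A -> c_dom c p -> c_dom c q ->
  A (c_path c p) -> A (c_path c q) -> c_path c p = c_path c q.
Proof.
move=> hA dp dq Ap Aq; apply: contrapT => neq.
have [pq|qp] := leP p q.
- by apply: (hA _ _ Ap Aq neq); right; exists c, p, q.
- apply: (hA _ _ Aq Ap (nesym neq)); right; exists c, q, p.
  by do !split => //; apply: ltW.
Qed.

Lemma Ccurves_spacelike_sup (A B Z : set M) : spacelike A -> B `<=` A ->
  Ccurves Z B `<=` Ccurves Z A.
Proof.
move=> hA BA c [[q [dq Bq]] before_B]; split; first by exists q; split => //; apply: BA.
move=> s ds As; apply: before_B => //.
by rewrite (spacelike_curve_eq hA ds dq As (BA _ Bq)).
Qed.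

Lemma CcurvesU (X Y Z : set M) : spacelike (X `|` Y) ->
  Ccurves Z (X `|` Y) = Ccurves Z X `|` Ccurves Z Y.
Proof.
move=> hXY; apply/seteqP; split => c; last first.
  case=> [Xc|Yc]; first exact: Ccurves_spacelike_sup hXY (@subsetUl _ X Y) _ Xc.
  exact: Ccurves_spacelike_sup hXY (@subsetUr _ X Y) _ Yc.
move=> [[q [dq XYq]] before_XY].
have [[r [dr Xr]]|noX] := pselect (exists r, c_dom c r /\ X (c_path c r)).
  left; split; first by exists r.
  by move=> s ds Xs; apply: before_XY => //; left.
right; split.
  by exists q; split => //; case: XYq => // Xq; case: noX; exists q.
by move=> s ds Ys; apply: before_XY => //; right.
Qed.

Lemma is_sliceU (X Y : slice M) : spacelike (X `|` Y) -> is_slice (X `|` Y).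
Proof. by move=> hXY; split => //; apply: closedU; [exact: (sl_ok X).1|exact: (sl_ok Y).1]. Qed.

End CausalCurves.

Theorem mainTheorem13 (R : realType) (M : spacetime R) (X Y : slice M)
  (hXY : spacelike (X `|` Y)) :
  exists W : slice M, sl_set W = X `|` Y /\ represents X Y W.
Proof.
pose W := Slice (is_sliceU hXY).
have homE Z : Ccurves Z W = Ccurves Z X `|` Ccurves Z Y by exact: CcurvesU.
pose phi (Z : slice M) (S : Defs.hom Z W) : veeP X Y Z :=
  exist _ (proj1_sig S) (subset_trans (proj2_sig S) (subsetW (homE Z))).
pose psi (Z : slice M) (C : veeP X Y Z) : Defs.hom Z W :=
  exist _ (proj1_sig C) (subset_trans (proj2_sig C) (subsetCW (homE Z))).
exists W; split => //; exists phi; split.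
- by move=> Z; exists (psi Z) => -[S hS]; apply: eq_exist.
- by move=> Z Z' U S; apply: eq_exist.
Qed.
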